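(* Let $h\ge 1$ be an integer and let $P\subset\mathbb R^2$ be a minimal lattice polygon with $\operatorname{ls}_\square(P)=h$. Then $P$ is lattice-equivalent to one of the following: (a) the segment $[(0,0),(h,0)]$; (b) a triangle $\operatorname{conv}\{(0,0),(a,h),(h,b)\}$ with integers $a,b\in[1,h-1]$ and $a+b\ge h$; (c) a quadrilateral $\operatorname{conv}\{(a,0),(0,b),(h,h-c),(h-d,h)\}$ with integers $a,b,c,d\in[1,h-1]$ and $\min\{a,b\}+\min\{c,d\}>h$.
   Context: A lattice polygon is a convex polygon (possibly degenerate, e.g. a segment) all of whose vertices lie in $\mathbb Z^2$. An affine unimodular transformation is $x\mapsto Ax+v$ with $A\in\mathbb Z^{2\times2}$, $\det A=\pm1$, $v\in\mathbb Z^2$; two sets are lattice-equivalent if one is the image of the other under such a map. With $\square=[0,1]^2$, $\operatorname{ls}_\square(P)$ is the smallest $l\ge0$ such that $\varphi(P)\subseteq l\square$ for some affine unimodular $\varphi$. A lattice polygon $P$ with $\operatorname{ls}_\square(P)=h$ is minimal if no lattice polygon properly contained in $P$ has $\operatorname{ls}_\square$ equal to $h$. *)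

From mathcomp Require Import all_boot all_order all_algebra.
From mathcomp Require Import reals.
Set Implicit Arguments. Unset Strict Implicit. Unset Printing Implicit Defensive.
Import Order.TTheory GRing.Theory Num.Theory.
Local Open Scope ring_scope.

Section Defs.
Variable R : realType.

Definition pt := (R * R)%type.
Definition region := pt -> Prop.

Definition of_lat (v : int * int) : pt := (v.1%:~R, v.2%:~R).

Definition conv (S : seq (int * int)) : region := fun x =>
  exists w : int * int -> R,
    (forall v, 0 <= w v) /\ \sum_(v <- S) w v = 1 /\
    x.1 = \sum_(v <- S) w v * v.1%:~R /\ x.2 = \sum_(v <- S) w v * v.2%:~R.

Definition lattice_polygon (P : region) : Prop :=
  exists S : seq (int * int), S != [::] /\ forall x, P x <-> conv S x.

(* affine unimodular map x |-> A x + v, A = [[a, b], [c, d]], det A = +-1 *)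
Record aff_unimod := AffUnimod {
  am_a : int; am_b : int; am_c : int; am_d : int; am_v1 : int; am_v2 : int }.

Definition unimodular (phi : aff_unimod) : Prop :=
  am_a phi * am_d phi - am_b phi * am_c phi = 1 \/
  am_a phi * am_d phi - am_b phi * am_c phi = -1.

Definition aff_app (phi : aff_unimod) (x : pt) : pt :=
  ((am_a phi)%:~R * x.1 + (am_b phi)%:~R * x.2 + (am_v1 phi)%:~R,
   (am_c phi)%:~R * x.1 + (am_d phi)%:~R * x.2 + (am_v2 phi)%:~R).

Definition img (phi : aff_unimod) (P : region) : region :=
  fun y => exists2 x, P x & y = aff_app phi x.

Definition subregion (P Q : region) : Prop := forall x, P x -> Q x.
Definition same_region (P Q : region) : Prop := forall x, P x <-> Q x.

Definition lattice_equiv (P Q : region) : Prop :=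
  exists phi, unimodular phi /\ same_region (img phi P) Q.

Definition scaled_square (l : R) : region := fun x =>
  0 <= x.1 <= l /\ 0 <= x.2 <= l.

(* ls_box(P) = l : l is the smallest l >= 0 such that phi(P) is contained
   in l * [0,1]^2 for some affine unimodular phi *)
Definition ls_sq_eq (P : region) (l : R) : Prop :=
  0 <= l /\
  (exists phi, unimodular phi /\ subregion (img phi P) (scaled_square l)) /\
  (forall (l' : R) phi, 0 <= l' -> unimodular phi ->
      subregion (img phi P) (scaled_square l') -> l <= l').

Definition minimal_ls (P : region) (h : R) : Prop :=
  lattice_polygon P /\ ls_sq_eq P h /\
  forall Q, lattice_polygon Q -> subregion Q P -> ~ same_region Q P ->
    ~ ls_sq_eq Q h.

End Defs.

(* Write P = conv S and measure S by the width max_S f - min_S f of integer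
   functionals f.  Then ls_box(P) is the least h for which some basis (f1, f2)
   of the dual lattice has both widths at most h.  Call (f1, f2) a certificate
   for h if moreover f2, f2 + f1 and f2 - f1 have width at least h: every
   m f1 + n f2 with n <> 0 then has width at least h, so a certified subset of
   P has ls_box h and, by minimality, spans P.  A basis of least total width is
   a certificate for S.  Minimality also bounds the width of f2 - f1 by h:
   otherwise a point of S can be shifted inside P so that a certified
   four-point set misses a vertex.  Hence in the coordinates (f2 - f1, f2) the
   polygon lies in [0, h]^2, touches all four sides, and x - y has width at
   most h.  Which corners of the square and which contact points it contains
   decides whether a certified segment, triangle or quadrilateral spans P. *)

From mathcomp Require Import all_boot all_order all_algebra reals.
From mathcomp Require Import zify ring lra.
From Stdlib Require Import ClassicalEpsilon Classical.
Set Implicit Arguments. Unset Strict Implicit. Unset Printing Implicit Defensive.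
Import Order.TTheory GRing.Theory Num.Theory.
Local Open Scope ring_scope.

Definition dot (f p : int * int) : int := f.1 * p.1 + f.2 * p.2.

Definition lincomb (m : int) (f : int * int) (n : int) (g : int * int) : int * int :=
  (m * f.1 + n * g.1, m * f.2 + n * g.2).

Definition vneg (f : int * int) : int * int := (- f.1, - f.2).

Definition det2 (f g : int * int) : int := f.1 * g.2 - f.2 * g.1.

Definition unim2 (f g : int * int) : Prop := det2 f g = 1 \/ det2 f g = -1.

Lemma dot_lincomb m f n g p : dot (lincomb m f n g) p = m * dot f p + n * dot g p.
Proof. rewrite /dot /lincomb /=; ring. Qed.

Lemma dot_vneg f p : dot (vneg f) p = - dot f p.
Proof. rewrite /dot /vneg /=; ring. Qed.

Lemma unim2_sym f g : unim2 f g -> unim2 g f.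
Proof. by rewrite /unim2 /det2; lia. Qed.

Lemma unim2_vneg f g : unim2 f g -> unim2 (vneg f) (vneg g).
Proof. by rewrite /unim2 /det2 /vneg /=; lia. Qed.

Lemma unim2_vnegl f g : unim2 f g -> unim2 (vneg f) g.
Proof. by rewrite /unim2 /det2 /vneg /=; lia. Qed.

Lemma unim2_lincombl f g k : unim2 f g -> unim2 (lincomb 1 f k g) g.
Proof. by rewrite /unim2 /det2 /lincomb /=; lia. Qed.

Lemma unim2_lincombr f g k : unim2 f g -> unim2 f (lincomb 1 g k f).
Proof. by rewrite /unim2 /det2 /lincomb /=; lia. Qed.

Lemma dual_vector f g : unim2 f g -> exists2 e, dot f e = 1 & dot g e = 0.
Proof.
move=> D; have dd : det2 f g * det2 f g = 1 by case: D => ->.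
exists (det2 f g * g.2, - (det2 f g * g.1)); last by rewrite /dot /=; ring.
by rewrite -dd /dot /det2 /=; ring.
Qed.

Lemma basis_decomposition f1 f2 g : unim2 f1 f2 ->
  g = lincomb (det2 f1 f2 * det2 g f2) f1 (det2 f1 f2 * det2 f1 g) f2.
Proof.
move=> D; have dd : det2 f1 f2 * det2 f1 f2 = 1 by case: D => ->.
case: g => x y; rewrite /lincomb /=; congr (_, _).
  by rewrite -[LHS]mul1r -dd /det2; ring.
by rewrite -[LHS]mul1r -dd /det2; ring.
Qed.

Lemma dot_argmin (S : seq (int * int)) f : S != [::] ->
  exists2 s0, s0 \in S & forall s, s \in S -> dot f s0 <= dot f s.
Proof.
elim: S => [//|a S IH] _.
have [->|/IH [b bS bmin]] := eqVneq S [::].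
  by exists a; rewrite ?mem_head // => s; rewrite inE => /eqP ->.
have [ab|ba] := lerP (dot f a) (dot f b).
  exists a; first exact: mem_head.
  by move=> s; rewrite inE => /predU1P [->//|/bmin]; apply: le_trans.
exists b; first by rewrite inE bS orbT.
by move=> s; rewrite inE => /predU1P [->|/bmin//]; apply: ltW.
Qed.

Lemma ex_minn_prop (Q : nat -> Prop) : (exists n, Q n) ->
  exists n, Q n /\ forall m, Q m -> (n <= m)%N.
Proof.
move=> [n Qn]; elim/ltn_ind: n Qn => n IH Qn.
have [[m [Qm lt_mn]]|no_less] := classic (exists m, Q m /\ (m < n)%N).
  exact: IH lt_mn Qm.
exists n; split=> // m Qm; rewrite leqNgt; apply/negP => lt_mn.
by apply: no_less; exists m.
Qed.

Definition lat_app (phi : aff_unimod) (p : int * int) : int * int :=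
  (am_a phi * p.1 + am_b phi * p.2 + am_v1 phi,
   am_c phi * p.1 + am_d phi * p.2 + am_v2 phi).

(* Cramer's rule, using [det^-1 = det] for [det = +-1]. *)
Definition lat_inv (phi : aff_unimod) (u : int * int) : int * int :=
  let det := am_a phi * am_d phi - am_b phi * am_c phi in
  (det * (am_d phi * (u.1 - am_v1 phi) - am_b phi * (u.2 - am_v2 phi)),
   det * (am_a phi * (u.2 - am_v2 phi) - am_c phi * (u.1 - am_v1 phi))).

Lemma lat_appK phi : unimodular phi -> cancel (lat_app phi) (lat_inv phi).
Proof.
case: phi => a b c d v1 v2 U [p1 p2]; rewrite /lat_inv /lat_app /=.
have dd : (a * d - b * c) * (a * d - b * c) = 1 by case: U => /= ->.
by congr (_, _); rewrite -[RHS]mul1r -dd; ring.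
Qed.

Definition aff_rows (f g : int * int) (v1 v2 : int) : aff_unimod :=
  AffUnimod f.1 f.2 g.1 g.2 v1 v2.

Section Widths.
Implicit Types (S T : seq (int * int)) (f g : int * int).

Definition width_le S f (h : int) : Prop :=
  forall p q, p \in S -> q \in S -> dot f p - dot f q <= h.

Definition width_ge S f (h : int) : Prop :=
  exists p q, [/\ p \in S, q \in S & h <= dot f p - dot f q].

Definition width S f : nat := \max_(p <- S) \max_(q <- S) `|dot f p - dot f q|%N.

Lemma width_le_sub S T f h : {subset T <= S} -> width_le S f h -> width_le T f h.
Proof. by move=> TS le p q /TS pS /TS qS; apply: le. Qed.

Lemma width_le_vneg S f h : width_le S f h -> width_le S (vneg f) h.
Proof. by move=> le p q pS qS; rewrite !dot_vneg; have := le q p qS pS; lia. Qed.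

Lemma width_le_range S f c (h : int) :
  (forall s, s \in S -> 0 <= dot f s + c <= h) -> width_le S f h.
Proof. by move=> range p q /range /andP [? ?] /range /andP [? ?]; lia. Qed.

Lemma width_le_ge0 S f h : S != [::] -> width_le S f h -> 0 <= h.
Proof. by case: S => // p S _ /(_ p p (mem_head _ _) (mem_head _ _)); rewrite subrr. Qed.

Lemma width_leP S f (h : nat) : width_le S f h <-> (width S f <= h)%N.
Proof.
split=> [le|wh p q pS qS].
  apply/bigmax_leqP_seq => p pS _; apply/bigmax_leqP_seq => q qS _.
  by have := le p q pS qS; have := le q p qS pS; lia.
have := leq_trans (@leq_bigmax_seq _ S xpredT (fun q => `|dot f p - dot f q|%N) q qS erefl)
  (@leq_bigmax_seq _ S xpredT (fun p => \max_(q <- S) `|dot f p - dot f q|%N) p pS erefl).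
by move=> /leq_trans /(_ wh); lia.
Qed.

Lemma width_ge_width S f (h : nat) : S != [::] -> (h <= width S f)%N -> width_ge S f h.
Proof.
move=> Sn hw; apply: NNPP => not_ge.
have lt_h p q : p \in S -> q \in S -> dot f p - dot f q < h%:Z.
  move=> pS qS; rewrite ltNge; apply/negP => hpq; apply: not_ge.
  by exists p, q.
case: h hw lt_h {not_ge} => [|h] hw lt_h.
  by case: S Sn lt_h {hw} => [//|a S] _ /(_ a a (mem_head _ _) (mem_head _ _)); lia.
have /width_leP : width_le S f h by move=> p q pS qS; have := lt_h p q pS qS; lia.
by move: hw; lia.
Qed.

End Widths.

Record width_cert (T : seq (int * int)) (f1 f2 : int * int) (h : int) : Prop :=
  WidthCert {
    cert_basis : unim2 f1 f2;
    cert_le1 : width_le T f1 h;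
    cert_le2 : width_le T f2 h;
    cert_ge2 : width_ge T f2 h;
    cert_geD : width_ge T (lincomb 1 f2 1 f1) h;
    cert_geB : width_ge T (lincomb 1 f2 (-1) f1) h }.

Lemma width_cert_vneg T f1 f2 h : width_cert T f1 f2 h -> width_cert T (vneg f1) f2 h.
Proof.
case=> D le1 le2 ge2 [p [q [pT qT gapD]]] [p' [q' [pT' qT' gapB]]].
split=> //; [exact: unim2_vnegl | exact: width_le_vneg | |].
  by exists p', q'; split=> //; move: gapB; rewrite !dot_lincomb !dot_vneg; lia.
by exists p, q; split=> //; move: gapD; rewrite !dot_lincomb !dot_vneg; lia.
Qed.

(* The three lower bounds of the certificate cover [|m| < n], [m >= n] and
   [m <= -n] respectively. *)
Lemma width_cert_ge T f1 f2 h m n : 0 <= h -> width_cert T f1 f2 h -> n != 0 ->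
  width_ge T (lincomb m f1 n f2) h.
Proof.
move=> h0 [_ le1 le2 ge2 geD geB] n_nz.
wlog n_gt0 : m n n_nz / 0 < n.
  move=> wlog; have [|n_lt0] := ltrP 0 n; first exact: wlog.
  have [||p [q [pT qT gap]]] := wlog (- m) (- n); [by rewrite oppr_eq0 | lia |].
  by exists q, p; split=> //; move: gap; rewrite !dot_lincomb; lia.
have gap_at p q : p \in T -> q \in T ->
    (h <= m * (dot f1 p - dot f1 q) + n * (dot f2 p - dot f2 q)) ->
    width_ge T (lincomb m f1 n f2) h.
  by move=> pT qT gap; exists p, q; split=> //; rewrite !dot_lincomb; lia.
have [m_small|] := ltrP `|m| n.
  have [p [q [pT qT gap]]] := ge2; apply: (gap_at p q) => //.
  by have := le1 p q pT qT; have := le1 q p qT pT; have := le2 p q pT qT; nia.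
rewrite ler_normr => /orP [m_ge|m_le].
  have [p [q [pT qT]]] := geD; rewrite !dot_lincomb => gap; apply: (gap_at p q) => //.
  by have := le2 p q pT qT; nia.
have [p [q [pT qT]]] := geB; rewrite !dot_lincomb => gap; apply: (gap_at p q) => //.
by have := le2 p q pT qT; nia.
Qed.

Lemma width_cert_basis T f1 f2 h g1 g2 : 0 <= h -> width_cert T f1 f2 h ->
  unim2 g1 g2 -> width_ge T g1 h \/ width_ge T g2 h.
Proof.
move=> h0 C D; have B := cert_basis C.
have [c1_0|c1_nz] := eqVneq (det2 f1 f2 * det2 f1 g1) 0; last first.
  by left; rewrite (basis_decomposition g1 B); apply: width_cert_ge.
have [c2_0|c2_nz] := eqVneq (det2 f1 f2 * det2 f1 g2) 0; last first.
  by right; rewrite (basis_decomposition g2 B); apply: width_cert_ge.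
have : det2 g1 g2 = 0.
  rewrite (basis_decomposition g1 B) (basis_decomposition g2 B) c1_0 c2_0.
  by rewrite /det2 /lincomb /=; ring.
by case: D => ->.
Qed.

(* A basis of least total width among those of width at most [h] is a
   certificate: shearing either vector cannot decrease its width. *)
Lemma exists_width_cert S (h : nat) r1 r2 : S != [::] -> unim2 r1 r2 ->
  width_le S r1 h -> width_le S r2 h ->
  (forall g1 g2, unim2 g1 g2 -> width_le S g1 (h%:Z - 1) -> width_le S g2 (h%:Z - 1) -> False) ->
  exists f1 f2, width_cert S f1 f2 h.
Proof.
move=> Sn D0 le1 le2 not_narrow.
pose good g1 g2 := [/\ unim2 g1 g2, (width S g1 <= h)%N & (width S g2 <= h)%N].
pose total g1 g2 := (width S g1 + width S g2)%N.
have [n [[g1 [g2 [good12 total12]]] least]] : exists n,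
    (exists g1 g2, good g1 g2 /\ total g1 g2 = n) /\
    forall m, (exists g1 g2, good g1 g2 /\ total g1 g2 = m) -> (n <= m)%N.
  apply: ex_minn_prop; exists (total r1 r2), r1, r2.
  by split=> //; split; rewrite // -width_leP.
have cert_of g g' : good g g' -> total g g' = n -> width S g' = h -> width_cert S g g' h.
  move=> [D wg wg'] total_n wh.
  have shear k : (h <= width S (lincomb 1 g' k g))%N.
    case: (leqP (width S (lincomb 1 g' k g)) h) => [le_h|]; last exact: ltnW.
    have : (n <= total g (lincomb 1 g' k g))%N.
      by apply: least; exists g, (lincomb 1 g' k g); split=> //; split=> //; apply: unim2_lincombr.
    by move: total_n; rewrite /total; lia.
  by split; rewrite ?width_leP ?wh //; apply: width_ge_width; rewrite ?wh //; apply: shear.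
case: (good12) => D w1 w2.
have [e2|ne2] := eqVneq (width S g2) h; first by exists g1, g2; apply: cert_of.
have [e1|ne1] := eqVneq (width S g1) h.
  exists g2, g1; apply: cert_of => //; last by rewrite /total addnC.
  by split=> //; apply: unim2_sym.
have narrow g : (width S g <= h)%N -> width S g != h -> width_le S g (h%:Z - 1).
  move=> le_h ne_h; have /width_leP le_pred : (width S g <= h.-1)%N by lia.
  by move=> p q pS qS; have := le_pred p q pS qS; lia.
by case: (not_narrow g1 g2 D); apply: narrow.
Qed.

Section Hull.
Variable R : realType.
Implicit Types (S T : seq (int * int)) (x y w : pt R).

Definition rdot (f : int * int) (x : pt R) : R := f.1%:~R * x.1 + f.2%:~R * x.2.

Definition cvx (t : R) (x y : pt R) : pt R :=
  (t * x.1 + (1 - t) * y.1, t * x.2 + (1 - t) * y.2).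

Lemma rdot_lat f p : rdot f (of_lat R p) = (dot f p)%:~R.
Proof. by rewrite /rdot /dot /of_lat /= intrD !intrM. Qed.

Lemma rdot_cvx f t x y : rdot f (cvx t x y) = t * rdot f x + (1 - t) * rdot f y.
Proof. rewrite /rdot /cvx /=; ring. Qed.

Lemma rdot_inj f g x y : unim2 f g -> rdot f x = rdot f y -> rdot g x = rdot g y -> x = y.
Proof.
move=> D Ef Eg; have d_nz : ((det2 f g)%:~R : R) != 0.
  by case: D => ->; rewrite ?intrN ?oppr_eq0 intr_eq0.
have coord1 z : (det2 f g)%:~R * z.1 = g.2%:~R * rdot f z - f.2%:~R * rdot g z :> R.
  by rewrite /rdot /det2 intrB !intrM; ring.
have coord2 z : (det2 f g)%:~R * z.2 = f.1%:~R * rdot g z - g.1%:~R * rdot f z :> R.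
  by rewrite /rdot /det2 intrB !intrM; ring.
case: x y Ef Eg coord1 coord2 => [x1 x2] [y1 y2] Ef Eg coord1 coord2.
congr (_, _); apply: (mulfI d_nz).
  by rewrite (coord1 (x1, x2)) (coord1 (y1, y2)) Ef Eg.
by rewrite (coord2 (x1, x2)) (coord2 (y1, y2)) Ef Eg.
Qed.

Lemma conv_rdot S x f : conv S x ->
  exists w : int * int -> R, [/\ forall v, 0 <= w v, \sum_(v <- S) w v = 1 &
    rdot f x = \sum_(v <- S) w v * (dot f v)%:~R].
Proof.
case=> w [w0 [w1 [e1 e2]]]; exists w; split=> //.
rewrite /rdot e1 e2 !mulr_sumr -big_split /=; apply: eq_bigr => v _.
rewrite /dot intrD !intrM; ring.
Qed.

Lemma conv_dot_le S x f (c : R) : conv S x ->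
  (forall s, s \in S -> (dot f s)%:~R <= c) -> rdot f x <= c.
Proof.
move=> /(conv_rdot f) [w [w0 w1 ->]] le_c.
have -> : c = \sum_(v <- S) w v * c by rewrite -mulr_suml w1 mul1r.
rewrite big_seq [leRHS]big_seq; apply: ler_sum => v vS.
by apply: ler_wpM2l; [exact: w0 | exact: le_c].
Qed.

Lemma conv_dot_ge S x f (c : R) : conv S x ->
  (forall s, s \in S -> c <= (dot f s)%:~R) -> c <= rdot f x.
Proof.
move=> /(conv_rdot f) [w [w0 w1 ->]] ge_c.
have -> : c = \sum_(v <- S) w v * c by rewrite -mulr_suml w1 mul1r.
rewrite big_seq [leRHS]big_seq; apply: ler_sum => v vS.
by apply: ler_wpM2l; [exact: w0 | exact: ge_c].
Qed.

Lemma conv_mem S s : s \in S -> conv S (of_lat R s).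
Proof.
move=> sS; pose c : R := (count_mem s S)%:R.
have c_nz : c != 0 by rewrite pnatr_eq0 -lt0n -has_count has_pred1.
have sum_at (F : int * int -> R) : \sum_(v <- S) (v == s)%:R / c * F v = F s.
  rewrite (eq_bigr (fun v => (v == s)%:R * (F s / c))); last first.
    by move=> v _; case: eqP => [->|]; rewrite ?mul0r // !mul1r mulrC.
  rewrite -mulr_suml; have -> : \sum_(v <- S) ((v == s)%:R : R) = c.
    rewrite /c -sum1_count natr_sum [RHS]big_mkcond; apply: eq_bigr => v _.
    by rewrite /= eq_sym; case: eqP.
  by rewrite mulrC divfK.
exists (fun v => (v == s)%:R / c); split; first by move=> v; rewrite divr_ge0 ?ler0n.
split; last by split; rewrite sum_at.
by rewrite -[RHS](sum_at (fun=> 1)); apply: eq_bigr => v _; rewrite mulr1.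
Qed.

Lemma conv_cvx S x y t : conv S x -> conv S y -> 0 <= t <= 1 -> conv S (cvx t x y).
Proof.
case=> wx [wx0 [wx1 [ex1 ex2]]] [wy [wy0 [wy1 [ey1 ey2]]]] /andP [t0 t1].
exists (fun v => t * wx v + (1 - t) * wy v); split.
  by move=> v; apply: addr_ge0; apply: mulr_ge0 => //; rewrite subr_ge0.
rewrite /cvx /= big_split /= -!mulr_sumr wx1 wy1; split; first by ring.
rewrite ex1 ex2 ey1 ey2 !mulr_sumr -!big_split /=.
by split; apply: eq_bigr => v _; ring.
Qed.

Lemma conv_trans S T x :
  (forall v, v \in T -> conv S (of_lat R v)) -> conv T x -> conv S x.
Proof.
move=> TS [w [w0 [w1 [e1 e2]]]].
pose weights v (m : int * int -> R) := (forall u, 0 <= m u) /\ \sum_(u <- S) m u = 1 /\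
  (of_lat R v).1 = \sum_(u <- S) m u * u.1%:~R /\ (of_lat R v).2 = \sum_(u <- S) m u * u.2%:~R.
pose mu v := epsilon (inhabits (fun=> 0)) (weights v).
have muP v : v \in T -> weights v (mu v) by move=> vT; apply: epsilon_spec; apply: TS.
have regroup (F : int * int -> R) :
    \sum_(u <- S) (\sum_(v <- T) w v * mu v u) * F u =
    \sum_(v <- T) w v * \sum_(u <- S) mu v u * F u.
  under eq_bigr do rewrite mulr_suml; rewrite exchange_big /=.
  by apply: eq_bigr => v _; rewrite mulr_sumr; apply: eq_bigr => u _; rewrite mulrA.
exists (fun u => \sum_(v <- T) w v * mu v u); split.
  move=> u; rewrite big_seq; apply: sumr_ge0 => v vT.
  by apply: mulr_ge0 => //; case: (muP v vT).
split.
  rewrite -w1; transitivity (\sum_(u <- S) (\sum_(v <- T) w v * mu v u) * 1).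
    by apply: eq_bigr => u _; rewrite mulr1.
  rewrite regroup !big_seq; apply: eq_bigr => v vT.
  by case: (muP v vT) => _ [sum1 _]; under eq_bigr do rewrite mulr1; rewrite sum1 mulr1.
rewrite e1 e2 !regroup !big_seq.
split; apply: eq_bigr => v vT; case: (muP v vT) => _ [_ []]; rewrite /of_lat /=.
  by move=> <-.
by move=> _ <-.
Qed.

Lemma exists_cvx_level f x y (c : R) : rdot f x <= c <= rdot f y ->
  exists2 t, 0 <= t <= 1 & rdot f (cvx t y x) = c.
Proof.
move=> /andP [xc cy]; have [exy|nxy] := eqVneq (rdot f x) (rdot f y).
  exists 0; first by rewrite lexx ler01.
  by rewrite rdot_cvx mul0r add0r subr0 mul1r; apply/eqP; rewrite eq_le xc exy.
have pos : 0 < rdot f y - rdot f x by rewrite subr_gt0 lt_neqAle nxy (le_trans xc cy).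
exists ((c - rdot f x) / (rdot f y - rdot f x)).
  apply/andP; split; first by apply: divr_ge0; rewrite subr_ge0 // ltW // -subr_gt0.
  by rewrite ler_pdivrMr // mul1r lerD2r.
by rewrite rdot_cvx; field; rewrite gt_eqF.
Qed.

Lemma conv_between S f g x y w : unim2 f g -> conv S x -> conv S y ->
  rdot f x <= rdot f w <= rdot f y -> rdot g x = rdot g w -> rdot g y = rdot g w ->
  conv S w.
Proof.
move=> D cx cy /exists_cvx_level [t t01 fw] gx gy.
have -> : w = cvx t y x by apply: (rdot_inj D); rewrite ?fw // rdot_cvx gx gy; ring.
exact: conv_cvx.
Qed.

(* On [B U] the functional [f - g] stays below its value at [B], so the point
   of [B U] on the [g]-level of [V] lies to the left of [z]. *)
Lemma conv_diagonal_between S f g B U V z : unim2 f g ->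
  conv S (of_lat R B) -> conv S (of_lat R U) -> conv S (of_lat R V) ->
  dot f U - dot f B <= dot g U - dot g B -> dot g B <= dot g V <= dot g U ->
  dot g z = dot g V ->
  dot (lincomb 1 f (-1) g) B <= dot (lincomb 1 f (-1) g) z <= dot (lincomb 1 f (-1) g) V ->
  conv S (of_lat R z).
Proof.
move=> D BS US VS slope /andP [BV VU] gz /andP [Bz zV].
have [t /andP [t0 t1] gZ] : exists2 t, 0 <= t <= 1 &
    rdot g (cvx t (of_lat R U) (of_lat R B)) = (dot g V)%:~R.
  by apply: exists_cvx_level; rewrite !rdot_lat !ler_int BV VU.
apply: (conv_between (unim2_lincombl (-1) D) (conv_cvx US BS _)
  (x := cvx t (of_lat R U) (of_lat R B)) VS); rewrite ?t0 ?t1 //.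
- rewrite !rdot_cvx !rdot_lat !ler_int zV andbT.
  have kUB : dot (lincomb 1 f (-1) g) U <= dot (lincomb 1 f (-1) g) B.
    by rewrite !dot_lincomb; lia.
  by move: kUB Bz; rewrite -!(ler_int R); nra.
- by rewrite gZ rdot_lat gz.
- by rewrite !rdot_lat gz.
Qed.

Lemma aff_app_rows f g v1 v2 (x : pt R) :
  aff_app (aff_rows f g v1 v2) x = (rdot f x + v1%:~R, rdot g x + v2%:~R).
Proof. by []. Qed.

Lemma img_conv phi (T : seq (int * int)) : unimodular phi ->
  same_region (img phi (conv (R:=R) T)) (conv (map (lat_app phi) T)).
Proof.
case: phi => a b c d v1 v2 U.
have affine (w : int * int -> R) (F G : int * int -> R) (k l m : R) :
    \sum_(v <- T) w v = 1 ->
    k * (\sum_(v <- T) w v * F v) + l * (\sum_(v <- T) w v * G v) + m =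
    \sum_(v <- T) w v * (k * F v + l * G v + m).
  move=> w1; rewrite [RHS](eq_bigr (fun v => k * (w v * F v) + l * (w v * G v) + w v * m));
    last by move=> v _; ring.
  by rewrite !big_split /= -!mulr_sumr -mulr_suml w1 mul1r.
move=> y; split.
  case=> x [w [w0 [w1 [e1 e2]]]] ->.
  have wK v : w (lat_inv (AffUnimod a b c d v1 v2) (lat_app (AffUnimod a b c d v1 v2) v)) = w v.
    by rewrite lat_appK.
  exists (fun u => w (lat_inv (AffUnimod a b c d v1 v2) u)); rewrite !big_map.
  split=> //; split; first by under eq_bigr do rewrite wK.
  rewrite /aff_app /= e1 e2 !affine //.
  by split; apply: eq_bigr => v _; rewrite wK !intrD !intrM.
case=> w [w0 [w1 [e1 e2]]]; rewrite !big_map in w1 e1 e2.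
exists (\sum_(v <- T) w (lat_app (AffUnimod a b c d v1 v2) v) * v.1%:~R,
        \sum_(v <- T) w (lat_app (AffUnimod a b c d v1 v2) v) * v.2%:~R).
  by exists (fun v => w (lat_app (AffUnimod a b c d v1 v2) v)).
rewrite /aff_app /=; case: y e1 e2 => y1 y2 /= -> ->.
by rewrite !affine //; congr (_, _); apply: eq_bigr => v _; rewrite !intrD !intrM.
Qed.

Lemma width_le_conv S T f h : width_le S f h ->
  (forall v, v \in T -> conv S (of_lat R v)) -> width_le T f h.
Proof.
move=> le TS p q /TS Sp /TS Sq; rewrite -(ler_int R) intrB -!rdot_lat.
suff : rdot f (of_lat R p) <= rdot f (of_lat R q) + h%:~R by lra.
apply: (conv_dot_le Sp) => s sS.
suff : (dot f s - h)%:~R <= rdot f (of_lat R q) by rewrite intrB; lra.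
apply: (conv_dot_ge Sq) => s' s'S; rewrite ler_int.
by have := le s s' sS s'S; lia.
Qed.

Lemma width_of_img_in_square S f g v1 v2 (l : R) :
  subregion (img (aff_rows f g v1 v2) (conv S)) (scaled_square l) ->
  forall p q, p \in S -> q \in S ->
  ((dot f p - dot f q)%:~R <= l) /\ ((dot g p - dot g q)%:~R <= l).
Proof.
move=> sub p q pS qS.
have in_sq s : s \in S ->
    (0 <= ((dot f s)%:~R + v1%:~R : R) <= l) /\ (0 <= ((dot g s)%:~R + v2%:~R : R) <= l).
  move=> sS; have := sub _ (ex_intro2 _ _ _ (conv_mem sS) erefl).
  by rewrite /scaled_square aff_app_rows /= !rdot_lat.
move: (in_sq p pS) (in_sq q qS) => [/andP [? ?] /andP [? ?]] [/andP [? ?] /andP [? ?]].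
by rewrite !intrB; split; lra.
Qed.

Lemma img_in_square_of_width S f g (l : int) : S != [::] ->
  width_le S f l -> width_le S g l ->
  exists v1 v2, subregion (img (aff_rows f g v1 v2) (conv S)) (scaled_square (l%:~R : R)).
Proof.
move=> Sn lef leg; have [p pS pmin] := dot_argmin f Sn; have [q qS qmin] := dot_argmin g Sn.
exists (- dot f p), (- dot g q) => _ [x xS ->].
have bounds k s0 : s0 \in S -> (forall s, s \in S -> dot k s0 <= dot k s) ->
    width_le S k l -> 0 <= rdot k x - (dot k s0)%:~R <= l%:~R.
  move=> s0S s0min lek; rewrite subr_ge0 lerBlDr -intrD.
  apply/andP; split; first by apply: (conv_dot_ge xS) => s sS; rewrite ler_int s0min.
  by apply: (conv_dot_le xS) => s sS; rewrite ler_int; have := lek s s0 sS s0S; lia.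
by rewrite /scaled_square aff_app_rows /= !intrN; split; apply: bounds.
Qed.

Lemma width_cert_ls_ge T f1 f2 (h : nat) (l : R) phi : width_cert T f1 f2 h ->
  unimodular phi -> subregion (img phi (conv T)) (scaled_square l) -> h%:R <= l.
Proof.
case: phi => a b c d v1 v2 C U sub.
have widths := width_of_img_in_square (f := (a, b)) (g := (c, d)) sub.
have gap_le g : width_ge T g h ->
    (forall p q, p \in T -> q \in T -> ((dot g p - dot g q)%:~R : R) <= l) -> (h%:R : R) <= l.
  by move=> [p [q [pT qT gap]]] le; apply: le_trans (le p q pT qT); rewrite pmulrn ler_int.
have [ge|ge] := width_cert_basis (g1 := (a, b)) (g2 := (c, d)) (le0z_nat h) C U.
  by apply: (gap_le _ ge) => p q pT qT; case: (widths p q pT qT).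
by apply: (gap_le _ ge) => p q pT qT; case: (widths p q pT qT).
Qed.

End Hull.

Definition classification (R : realType) (P : region R) (h : nat) : Prop :=
  lattice_equiv P (conv (R:=R) [:: (0, 0); (h%:Z, 0)]) \/
  (exists a b : nat,
      [/\ (1 <= a <= h.-1)%N, (1 <= b <= h.-1)%N, (h <= a + b)%N &
       lattice_equiv P (conv (R:=R) [:: (0, 0); (a%:Z, h%:Z); (h%:Z, b%:Z)])]) \/
  (exists a b c d : nat,
      [/\ (1 <= a <= h.-1)%N, (1 <= b <= h.-1)%N, (1 <= c <= h.-1)%N,
          (1 <= d <= h.-1)%N &
          (h < minn a b + minn c d)%N] /\
       lattice_equiv P (conv (R:=R) [:: (a%:Z, 0); (0, b%:Z);
                                   (h%:Z, h%:Z - c%:Z); (h%:Z - d%:Z, h%:Z)])).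

Definition square_frame (S : seq (int * int)) (h : int) (al be : int * int) (c1 c2 : int) :=
  [/\ unim2 al be, forall s, s \in S -> 0 <= dot al s + c1 <= h,
      forall s, s \in S -> 0 <= dot be s + c2 <= h & width_le S (lincomb 1 al (-1) be) h].

Lemma square_frame_reflect S h al be c1 c2 : square_frame S h al be c1 c2 ->
  square_frame S h (vneg al) (vneg be) (h - c1) (h - c2).
Proof.
case=> D x_range y_range diag; split; first exact: unim2_vneg.
- by move=> s /x_range; rewrite dot_vneg; lia.
- by move=> s /y_range; rewrite dot_vneg; lia.
by move=> p q pS qS; have := diag q p qS pS; rewrite !dot_lincomb !dot_vneg; lia.
Qed.

Lemma square_frame_swap S h al be c1 c2 : square_frame S h al be c1 c2 ->
  square_frame S h be al c2 c1.
Proof.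
case=> D x_range y_range diag; split=> //; first exact: unim2_sym.
by move=> p q pS qS; have := diag q p qS pS; rewrite !dot_lincomb; lia.
Qed.

Ltac width_witness p q := exists p, q; split; rewrite ?inE ?eqxx ?orbT // ?dot_lincomb; lia.

Section MinimalPolygon.
Variables (R : realType) (P : region R) (S : seq (int * int)) (h : nat).
Hypothesis PS : same_region P (conv S).

Section LsBox.
Hypothesis lsP : ls_sq_eq P h%:R.

Lemma ls_width_le : exists g1 g2, [/\ unim2 g1 g2, width_le S g1 h & width_le S g2 h].
Proof.
case: lsP => _ [[[a b c d v1 v2] [U sub]] _].
have sub' : subregion (img (aff_rows (a, b) (c, d) v1 v2) (conv S)) (scaled_square (h%:R : R)).
  by move=> y [x Sx ->]; apply: sub; exists x => //; apply/PS.
exists (a, b), (c, d); split=> // p q pS qS; rewrite -(ler_int R) -pmulrn;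
  by case: (width_of_img_in_square sub' pS qS).
Qed.

Lemma ls_width_gt : S != [::] -> forall g1 g2, unim2 g1 g2 ->
  width_le S g1 (h%:Z - 1) -> width_le S g2 (h%:Z - 1) -> False.
Proof.
move=> Sn g1 g2 D le1 le2; case: lsP => _ [_ least].
have [v1 [v2 sub]] := img_in_square_of_width R Sn le1 le2.
have : h%:R <= (h%:Z - 1)%:~R :> R.
  apply: (least _ (aff_rows g1 g2 v1 v2)) => //; first by rewrite ler0z (width_le_ge0 Sn le1).
  by move=> y [x Px ->]; apply: sub; exists x => //; apply/PS.
by rewrite pmulrn ler_int; lia.
Qed.

End LsBox.

Section Minimality.
Hypothesis minP : minimal_ls P h%:R.

Lemma cert_conv_eq T f1 f2 : (forall v, v \in T -> conv S (of_lat R v)) ->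
  width_cert T f1 f2 h -> same_region (conv T) P.
Proof.
move=> TS C; have [_ [[_ [[phi [U sub]] _]] least]] := minP.
have TP : subregion (conv T) P by move=> x /(conv_trans TS) /PS.
have Tn : T != [::].
  by case: (cert_ge2 C) => p [q [pT _ _]]; apply/eqP => T0; rewrite T0 in pT.
apply: NNPP => neq; apply: (least (conv T)) neq _ => //; first by exists T.
split; first exact: ler0n.
split; first by exists phi; split=> // y [x Tx ->]; apply: sub; exists x => //; apply: TP.
by move=> l' psi _ U'; apply: width_cert_ls_ge C U'.
Qed.

Lemma cert_dot_le T f1 f2 g (c : int) : (forall v, v \in T -> conv S (of_lat R v)) ->
  width_cert T f1 f2 h -> (forall t, t \in T -> dot g t <= c) ->
  forall s, s \in S -> dot g s <= c.
Proof.
move=> TS C le s sS; rewrite -(ler_int R) -rdot_lat.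
apply: (conv_dot_le (proj2 (cert_conv_eq TS C _) (proj2 (PS _) (conv_mem R sS)))).
by move=> t tT; rewrite ler_int le.
Qed.

Lemma cert_lattice_equiv T f1 f2 f g (v1 v2 : int) L : {subset T <= S} ->
  width_cert T f1 f2 h -> unim2 f g ->
  [seq (dot f p + v1, dot g p + v2) | p <- T] = L -> lattice_equiv P (conv L).
Proof.
move=> TS C D <-; have eqTP := cert_conv_eq (fun v vT => conv_mem R (TS v vT)) C.
have imgT := img_conv (R:=R) (phi := aff_rows f g v1 v2) T D.
exists (aff_rows f g v1 v2); split=> // y; split=> [[x /eqTP Tx ->]|].
  by apply/imgT; exists x.
by move=> /imgT [x /eqTP Px ->]; exists x.
Qed.

(* Shifting [V] one step against [f1] gives a point [z] of [conv S]; then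
   [[:: B; U; z; V']] is certified, so its hull is [P], yet it misses [V]. *)
Lemma diagonal_excess_absurd f1 f2 B U V V' : unim2 f1 f2 ->
  width_le S f1 h -> width_le S f2 h -> B \in S -> U \in S -> V \in S -> V' \in S ->
  dot f2 U - dot f2 B = h -> dot f1 B <= dot f1 U ->
  h%:Z + 1 <= dot (lincomb 1 f1 (-1) f2) V - dot (lincomb 1 f1 (-1) f2) V' ->
  dot (lincomb 1 f1 (-1) f2) B < dot (lincomb 1 f1 (-1) f2) V -> False.
Proof.
move=> D le1 le2 BS US VS V'S gapBU BU excess above.
have [e e1 e2] := dual_vector D.
pose z := (V.1 - e.1, V.2 - e.2).
have z1 : dot f1 z = dot f1 V - 1 by rewrite -e1 /dot /z /=; ring.
have z2 : dot f2 z = dot f2 V by rewrite -[RHS]subr0 -e2 /dot /z /=; ring.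
have zS : conv S (of_lat R z).
  apply: (conv_diagonal_between D (conv_mem R BS) (conv_mem R US) (conv_mem R VS)) => //.
  - by have := le1 U B US BS; lia.
  - by have := le2 U V US VS; have := le2 V B VS BS; lia.
  - by rewrite !dot_lincomb z1 z2; move: above; rewrite !dot_lincomb; lia.
pose T := [:: B; U; z; V'].
have TS v : v \in T -> conv S (of_lat R v).
  rewrite !inE => /or4P [] /eqP -> //; exact: conv_mem.
have C : width_cert T f1 f2 h.
  split=> //; [exact: width_le_conv le1 TS | exact: width_le_conv le2 TS | | |].
  - by width_witness U B.
  - by width_witness U B.
  - by exists V', z; split; rewrite ?inE ?eqxx ?orbT // !dot_lincomb z1 z2;
      move: excess; rewrite !dot_lincomb; lia.
suff bound t : t \in T -> dot (lincomb 1 f1 (-1) f2) t <= dot (lincomb 1 f1 (-1) f2) V - 1.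
  by have := cert_dot_le TS C bound VS; lia.
have := le1 U B US BS; move: excess above; rewrite !dot_lincomb.
by rewrite !inE => ? ? ? /or4P [] /eqP ->; rewrite ?z1 ?z2; lia.
Qed.

Lemma diagonal_width_le f1 f2 B U : width_cert S f1 f2 h -> B \in S -> U \in S ->
  dot f2 U - dot f2 B = h -> dot f1 B <= dot f1 U -> width_le S (lincomb 1 f2 (-1) f1) h.
Proof.
case=> D le1 le2 _ _ _ BS US gapBU BU p q pS qS; rewrite leNgt; apply/negP => excess.
have [above|below] := ltrP (dot (lincomb 1 f1 (-1) f2) B) (dot (lincomb 1 f1 (-1) f2) q).
  apply: (diagonal_excess_absurd D le1 le2 BS US qS pS gapBU BU) => //.
  by move: excess; rewrite !dot_lincomb; lia.
have := le1 U B US BS; move: excess below; rewrite !dot_lincomb => excess below gapU.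
apply: (diagonal_excess_absurd (unim2_vneg D) (width_le_vneg le1) (width_le_vneg le2)
  US BS pS qS); rewrite ?dot_lincomb ?dot_vneg; lia.
Qed.

Section Square.
Variables (al be : int * int) (c1 c2 : int).
Hypothesis frameS : square_frame S h al be c1 c2.
Local Notation x s := (dot al s + c1).
Local Notation y s := (dot be s + c2).

Lemma corners_segment O E : O \in S -> E \in S ->
  x O = 0 -> y O = 0 -> x E = h -> y E = h -> classification P h.
Proof.
case: frameS => D x_range y_range diag OS ES xO yO xE yE.
have TS : {subset [:: O; E] <= S} by apply/allP; rewrite /= OS ES.
left; apply: (cert_lattice_equiv (f1 := lincomb 1 al (-1) be) (f2 := be)
  (v1 := c1) (v2 := c2 - c1) TS _ (unim2_lincombr (-1) D)).
- split; [exact: unim2_lincombl | exact: width_le_sub TS diag |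
    exact: width_le_sub TS (width_le_range y_range) |
    width_witness E O | width_witness E O | width_witness E O].
- by rewrite /= !dot_lincomb; congr [:: (_, _); (_, _)]; lia.
Qed.

Lemma level_segment L0 R0 : L0 \in S -> R0 \in S ->
  x L0 = 0 -> x R0 = h -> y L0 = y R0 -> classification P h.
Proof.
case: frameS => D x_range y_range diag LS RS xL xR yLR.
have TS : {subset [:: L0; R0] <= S} by apply/allP; rewrite /= LS RS.
left; apply: (cert_lattice_equiv (f1 := be) (f2 := al)
  (v1 := c1) (v2 := - dot be L0) TS _ D).
- split; [exact: unim2_sym | exact: width_le_sub TS (width_le_range y_range) |
    exact: width_le_sub TS (width_le_range x_range) |
    width_witness R0 L0 | width_witness R0 L0 | width_witness R0 L0].
- by rewrite /=; congr [:: (_, _); (_, _)]; lia.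
Qed.

Lemma corner_triangle O R0 U0 : O \in S -> R0 \in S -> U0 \in S ->
  x O = 0 -> y O = 0 -> x R0 = h -> y U0 = h -> y R0 != h -> x U0 != h ->
  classification P h.
Proof.
case: frameS => D x_range y_range diag OS RS US xO yO xR yU yR_h xU_h.
move: (x_range U0 US) (y_range R0 RS) (diag R0 U0 RS US).
rewrite !dot_lincomb => /andP [? ?] /andP [? ?] ?.
have TS : {subset [:: O; U0; R0] <= S} by apply/allP; rewrite /= OS US RS.
right; left; exists `|x U0|%N, `|y R0|%N; split; try lia.
apply: (cert_lattice_equiv (f1 := lincomb 1 al (-1) be) (f2 := be)
  (v1 := c1) (v2 := c2) TS _ D).
- split; [exact: unim2_lincombl | exact: width_le_sub TS diag |
    exact: width_le_sub TS (width_le_range y_range) |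
    width_witness U0 O | width_witness R0 O | width_witness U0 O].
- by rewrite /=; congr [:: (_, _); (_, _); (_, _)]; lia.
Qed.

(* [[:: L0; R0; U0]] would be certified, yet it stays above the bottom side
   that [B0] touches. *)
Lemma upper_triangle_absurd L0 R0 U0 B0 : L0 \in S -> R0 \in S -> U0 \in S -> B0 \in S ->
  x L0 = 0 -> x R0 = h -> y U0 = h -> y B0 = 0 -> y L0 != 0 -> y R0 + x U0 = h -> False.
Proof.
case: frameS => D x_range y_range diag LS RS US BS xL xR yU yB yL0 cut.
move: (y_range L0 LS) (diag R0 L0 RS LS); rewrite !dot_lincomb => /andP [? ?] ?.
have TS : {subset [:: L0; R0; U0] <= S} by apply/allP; rewrite /= LS RS US.
have C : width_cert [:: L0; R0; U0] be al h.
  split; [exact: unim2_sym | exact: width_le_sub TS (width_le_range y_range) |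
    exact: width_le_sub TS (width_le_range x_range) |
    width_witness R0 L0 | width_witness R0 L0 | width_witness R0 U0].
suff bound t : t \in [:: L0; R0; U0] -> dot (vneg be) t <= c2 - 1.
  have := cert_dot_le (fun v vT => conv_mem R (TS v vT)) C bound BS.
  by rewrite dot_vneg; lia.
by rewrite !inE => /or3P [] /eqP ->; rewrite dot_vneg; lia.
Qed.

Lemma quadrilateral L0 R0 B0 U0 : L0 \in S -> R0 \in S -> B0 \in S -> U0 \in S ->
  x L0 = 0 -> x R0 = h -> y B0 = 0 -> y U0 = h ->
  y L0 != 0 -> x B0 != 0 -> y R0 != h -> x U0 != h ->
  y L0 != y R0 -> x B0 != x U0 -> y R0 + x U0 != h -> x B0 + y L0 != h ->
  classification P h.
Proof.
case: frameS => D x_range y_range diag LS RS BS US xL xR yB yU.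
move: (x_range B0 BS) (y_range L0 LS) (x_range U0 US) (y_range R0 RS).
move: (diag B0 L0 BS LS) (diag R0 L0 RS LS) (diag B0 U0 BS US) (diag R0 U0 RS US).
rewrite !dot_lincomb => ? ? ? ? /andP [? ?] /andP [? ?] /andP [? ?] /andP [? ?] *.
have TS : {subset [:: B0; R0; L0; U0] <= S} by apply/allP; rewrite /= BS RS LS US.
right; right; exists `|h%:Z - x B0|%N, `|y R0|%N, `|h%:Z - y L0|%N, `|x U0|%N.
split; first by split; lia.
apply: (cert_lattice_equiv (f1 := lincomb 1 al (-1) be) (f2 := be)
  (v1 := h%:Z - c1) (v2 := c2) TS _ (unim2_vnegl D)).
- split; [exact: unim2_lincombl | exact: width_le_sub TS diag |
    exact: width_le_sub TS (width_le_range y_range) |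
    width_witness U0 B0 | width_witness R0 L0 | width_witness U0 B0].
- by rewrite /= !dot_vneg; congr [:: (_, _); (_, _); (_, _); (_, _)]; lia.
Qed.

End Square.

Lemma square_frame_classification al be c1 c2 L0 R0 B0 U0 :
  square_frame S h al be c1 c2 -> L0 \in S -> R0 \in S -> B0 \in S -> U0 \in S ->
  dot al L0 + c1 = 0 -> dot al R0 + c1 = h -> dot be B0 + c2 = 0 -> dot be U0 + c2 = h ->
  classification P h.
Proof.
move=> frameS LS RS BS US xL xR yB yU.
have reflS := square_frame_reflect frameS.
have [[O OS [xO yO]]|noO] :=
  classic (exists2 O, O \in S & dot al O + c1 = 0 /\ dot be O + c2 = 0).
  have [[E ES [xE yE]]|noE] :=
    classic (exists2 E, E \in S & dot al E + c1 = h /\ dot be E + c2 = h).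
    exact: (corners_segment frameS OS ES xO yO xE yE).
  apply: (corner_triangle frameS OS RS US) => //;
    apply/eqP => ?; apply: noE; [exists R0 | exists U0] => //.
have [[E ES [xE yE]]|noE] :=
  classic (exists2 E, E \in S & dot al E + c1 = h /\ dot be E + c2 = h).
  apply: (corner_triangle reflS ES LS BS); rewrite ?dot_vneg; try lia;
    apply/eqP => ?; apply: noO; [exists L0 | exists B0] => //; lia.
have yL0 : dot be L0 + c2 != 0 by apply/eqP => ?; apply: noO; exists L0.
have xB0 : dot al B0 + c1 != 0 by apply/eqP => ?; apply: noO; exists B0.
have yRh : dot be R0 + c2 != h by apply/eqP => ?; apply: noE; exists R0.
have xUh : dot al U0 + c1 != h by apply/eqP => ?; apply: noE; exists U0.
have [yLR|yLR] := eqVneq (dot be L0 + c2) (dot be R0 + c2).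
  exact: (level_segment frameS LS RS xL xR yLR).
have [xBU|xBU] := eqVneq (dot al B0 + c1) (dot al U0 + c1).
  exact: (level_segment (square_frame_swap frameS) BS US yB yU xBU).
have [cutRU|cutRU] := eqVneq (dot be R0 + c2 + (dot al U0 + c1)) h.
  by case: (upper_triangle_absurd frameS LS RS US BS xL xR yU yB yL0 cutRU).
have [cutBL|cutBL] := eqVneq (dot al B0 + c1 + (dot be L0 + c2)) h.
  by case: (upper_triangle_absurd reflS RS LS BS US); rewrite ?dot_vneg; lia.
exact: (quadrilateral frameS LS RS BS US xL xR yB yU yL0 xB0 yRh xUh yLR xBU cutRU cutBL).
Qed.

(* In the coordinates [(f2 - f1, f2)], [S] fills the square [[0, h]^2] and the
   difference of the coordinates, [- f1], has width at most [h]. *)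
Lemma cert_classification f1 f2 : width_cert S f1 f2 h -> classification P h.
Proof.
move=> C; have [_ _ le2 [U [q [US qS gap]]] _ _] := C.
have Sn : S != [::] by apply/eqP => S0; rewrite S0 in US.
have [B BS Bmin] := dot_argmin f2 Sn.
have gapBU : dot f2 U - dot f2 B = h by have := Bmin q qS; have := le2 U B US BS; lia.
wlog BU : f1 C / dot f1 B <= dot f1 U.
  move=> wlog; have [|UB] := lerP (dot f1 B) (dot f1 U); first exact: wlog.
  by apply: (wlog (vneg f1)); rewrite ?dot_vneg; [exact: width_cert_vneg | lia].
have diag := diagonal_width_le C BS US gapBU BU.
have [D le1 _ _ _ [R0 [q' [RS q'S gapR]]]] := C.
have [L0 LS Lmin] := dot_argmin (lincomb 1 f2 (-1) f1) Sn.
apply: (square_frame_classification (al := lincomb 1 f2 (-1) f1) (be := f2)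
  (c1 := - dot (lincomb 1 f2 (-1) f1) L0) (c2 := - dot f2 B) _ LS RS BS US); try lia.
- split.
  + by move: D; rewrite /unim2 /det2 /lincomb /=; lia.
  + by move=> s sS; have := Lmin s sS; have := diag s L0 sS LS; lia.
  + by move=> s sS; have := Bmin s sS; have := le2 s B sS BS; lia.
  + move=> p p' pS p'S; rewrite !dot_lincomb.
    by have := le1 p' p p'S pS; lia.
- by have := Lmin q' q'S; have := diag R0 L0 RS LS; lia.
Qed.

End Minimality.
End MinimalPolygon.

Theorem mainTheorem8 (R : realType) (h : nat) (P : region R) :
  (1 <= h)%N -> minimal_ls P h%:R ->
  lattice_equiv P (conv (R:=R) [:: (0, 0); (h%:Z, 0)]) \/
  (exists a b : nat,
      [/\ (1 <= a <= h.-1)%N, (1 <= b <= h.-1)%N, (h <= a + b)%N &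
       lattice_equiv P (conv (R:=R) [:: (0, 0); (a%:Z, h%:Z); (h%:Z, b%:Z)])]) \/
  (exists a b c d : nat,
      [/\ (1 <= a <= h.-1)%N, (1 <= b <= h.-1)%N, (1 <= c <= h.-1)%N,
          (1 <= d <= h.-1)%N &
          (h < minn a b + minn c d)%N] /\
       lattice_equiv P (conv (R:=R) [:: (a%:Z, 0); (0, b%:Z);
                                   (h%:Z, h%:Z - c%:Z); (h%:Z - d%:Z, h%:Z)])).
Proof.
(* The argument does not need [1 <= h]. *)
move=> _ minP; have [[S [Sn PS]] [lsP _]] := minP.
have [r1 [r2 [D le1 le2]]] := ls_width_le PS lsP.
have [f1 [f2 C]] := exists_width_cert Sn D le1 le2 (ls_width_gt PS lsP Sn).
exact: (cert_classification PS minP C).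
Qed.
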